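(* Let $A\in\mathcal{S}_n$. Then $A\in\operatorname{int}(\mathcal{C}_n)$ if and only if $\operatorname{rank}(A)=n$ and there exist $b_1\in\mathbb{R}^n_{++}$ and $\lambda>0$ such that $A-\lambda b_1b_1^T\in\mathcal{C}_n$.
   Context: $\mathcal{S}_n$: real symmetric $n\times n$ matrices. $\mathcal{C}_n=\{BB^T: B\in\mathbb{R}^{n\times m}\text{ entrywise nonnegative},\ m\ge1\}$ is the completely positive cone, with interior taken in $\mathcal{S}_n$. $\mathbb{R}^n_{++}=\{x\in\mathbb{R}^n: x>0\text{ entrywise}\}$. *)

(* Scalars: an arbitrary real closed field R (includes the reals). *)
From HB Require Import structures.
From mathcomp Require Import all_boot all_order all_algebra.
Set Implicit Arguments. Unset Strict Implicit. Unset Printing Implicit Defensive.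
Import Order.TTheory GRing.Theory Num.Theory.
Local Open Scope ring_scope.

Definition symmetric_mx (R : rcfType) (n : nat) (A : 'M[R]_n) : Prop := A^T = A.

Definition nonneg_mx (R : rcfType) (n m : nat) (B : 'M[R]_(n, m)) : Prop :=
  forall i j, 0 <= B i j.

Definition completely_positive (R : rcfType) (n : nat) (A : 'M[R]_n) : Prop :=
  exists (m : nat) (B : 'M[R]_(n, m)), (0 < m)%N /\ nonneg_mx B /\ A = B *m B^T.

(* interior of C_n taken in S_n (topology of S_n given by the entrywise max norm,
   equivalent to any norm in finite dimension): A in S_n and some open
   ball in S_n around A is contained in C_n *)
Definition int_completely_positive (R : rcfType) (n : nat) (A : 'M[R]_n) : Prop :=
  symmetric_mx A /\
  exists eps : R, 0 < eps /\
    forall X : 'M[R]_n, symmetric_mx X ->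
      (forall i j, `|X i j - A i j| < eps) -> completely_positive X.

From HB Require Import structures.
From mathcomp Require Import all_boot all_order all_algebra.
From mathcomp Require Import ring lra.
Import Order.TTheory GRing.Theory Num.Theory.
Local Open Scope ring_scope.

Set Implicit Arguments. Unset Strict Implicit. Unset Printing Implicit Defensive.

(* If A is interior, then A - d S stays in C_n for every
   symmetric S and small d > 0.  With S = x^T x for a vector x with x A = 0
   this contradicts positive semidefiniteness of C_n, so A is nonsingular;
   with S = 1 1^T it gives the required b1 = 1 and lam = d.

   Write A = 2 B B^T + C C^T with B >= r > 0 entrywise
   (all columns proportional to b1) and C >= 0.  The matrix
   P = [B + sC, B - sC] is entrywise positive for small s > 0, satisfies
   A = P P^T + (1 - 2s^2) C C^T, and has a right inverse L because A is
   invertible and B, C are both of the form P Q.  For X near A, the matrix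
   F = L (X - A) L^T is small and X = P (1 + F) P^T + (1 - 2s^2) C C^T.
   Finally, for an entrywise positive P and a small symmetric F, the matrix
   P (1 + F) P^T is completely positive, by an explicit decomposition of
   1 + F into a sum of Gram matrices and a nonnegative diagonal. *)

Section ConeClosure.
Variable R : rcfType.

Lemma cp0 n : completely_positive (0 : 'M[R]_n).
Proof.
exists 1%N, 0; split=> //; split; first by move=> i j; rewrite mxE.
by rewrite mul0mx.
Qed.

(* The width-0 case is not covered by the definition (m >= 1) and is the
   zero matrix. *)
Lemma cp_gram n m (B : 'M[R]_(n, m)) :
  nonneg_mx B -> completely_positive (B *m B^T).
Proof.
case: m B => [|m] B hB; last by exists m.+1, B.
by rewrite thinmx0 mul0mx; apply: cp0.
Qed.

Lemma cpD n (X Y : 'M[R]_n) :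
  completely_positive X -> completely_positive Y -> completely_positive (X + Y).
Proof.
move=> [m1 [B1 [h1 [n1 ->]]]] [m2 [B2 [h2 [n2 ->]]]].
exists (m1 + m2)%N, (row_mx B1 B2); split; first by rewrite addn_gt0 h1.
split; last by rewrite tr_row_mx mul_row_col.
by move=> i j; rewrite -[j]splitK; case: split => k /=; rewrite ?row_mxEl ?row_mxEr.
Qed.

Lemma cpZ n (c : R) (X : 'M[R]_n) :
  0 <= c -> completely_positive X -> completely_positive (c *: X).
Proof.
move=> c0 [m [B [hm [hB ->]]]].
exists m, (Num.sqrt c *: B); split => //; split.
  by move=> i j; rewrite mxE mulr_ge0 ?sqrtr_ge0.
by rewrite linearZ /= -scalemxAr -scalemxAl scalerA -expr2 sqr_sqrtr.
Qed.

Lemma cp_sum n (I : finType) (F : I -> 'M[R]_n) :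
  (forall i, completely_positive (F i)) -> completely_positive (\sum_i F i).
Proof.
by move=> h; apply: (big_ind (fun X => completely_positive X)); [apply: cp0|apply: cpD|].
Qed.

Lemma cp_psd n (X : 'M[R]_n) (v : 'rV[R]_n) :
  completely_positive X -> 0 <= (v *m X *m v^T) 0 0.
Proof.
move=> [m [B [_ [_ ->]]]].
have -> : v *m (B *m B^T) *m v^T = (v *m B) *m (v *m B)^T.
  by rewrite trmx_mul !mulmxA.
by rewrite mxE; apply: sumr_ge0 => i _; rewrite !mxE -expr2 sqr_ge0.
Qed.

End ConeClosure.

(* A crude but convenient bound on all entries of a matrix (any norm would
   do in finite dimension); it is positive, so it may be divided by. *)
Definition mx_bound (R : realDomainType) p q (M : 'M[R]_(p, q)) : R :=
  1 + \sum_i \sum_j `|M i j|.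

Lemma mx_bound_gt0 (R : realDomainType) p q (M : 'M[R]_(p, q)) : 0 < mx_bound M.
Proof.
rewrite /mx_bound; apply: (lt_le_trans ltr01); rewrite lerDl.
by apply: sumr_ge0 => i _; apply: sumr_ge0.
Qed.

Lemma mx_bound_ge (R : realDomainType) p q (M : 'M[R]_(p, q)) i j :
  `|M i j| <= mx_bound M.
Proof.
rewrite /mx_bound (bigD1 i) //= (bigD1 j) //=.
have h1 : 0 <= \sum_(t < q | t != j) `|M i t| by apply: sumr_ge0.
have h2 : 0 <= \sum_(t < p | t != i) \sum_j `|M t j|.
  by apply: sumr_ge0 => t _; apply: sumr_ge0.
lra.
Qed.

Lemma mul_bound (R : numDomainType) p q r (X : 'M[R]_(p, q)) (Y : 'M[R]_(q, r)) x y :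
  (forall i j, `|X i j| <= x) -> (forall i j, `|Y i j| <= y) ->
  forall i j, `|(X *m Y) i j| <= q%:R * (x * y).
Proof.
move=> hX hY i j; rewrite mxE; apply: le_trans (ler_norm_sum _ _ _) _.
have -> : q%:R * (x * y) = \sum_(t < q) (x * y).
  by rewrite sumr_const card_ord mulr_natl.
by apply: ler_sum => t _; rewrite normrM ler_pM.
Qed.

Lemma vvt_gt0 (R : realDomainType) n (v : 'rV[R]_n) :
  v != 0 -> 0 < (v *m v^T) 0 0.
Proof.
move=> v0.
have [i hi] : exists i, v 0 i != 0.
  apply/existsP; apply: contraNT v0 => /existsPn h.
  by apply/eqP/rowP => i; rewrite mxE; apply/eqP/negPn/h.
rewrite mxE (bigD1 i) //= mxE.
have h1 : 0 < v 0 i * v 0 i by rewrite -expr2 exprn_even_gt0 // hi orbT.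
have h2 : 0 <= \sum_(j < n | j != i) v 0 j * v^T j 0.
  by apply: sumr_ge0 => j _; rewrite mxE -expr2 sqr_ge0.
lra.
Qed.

Lemma int_cp_subZ (R : rcfType) n (A S : 'M[R]_n) :
  int_completely_positive A -> S^T = S ->
  exists2 d : R, 0 < d & completely_positive (A - d *: S).
Proof.
move=> [hA [eps [eps0 hX]]] hS.
pose d := eps / (2 * mx_bound S).
have S0 := mx_bound_gt0 S.
have d0 : 0 < d by rewrite divr_gt0 // mulr_gt0.
have hdS : d * mx_bound S = eps / 2 by rewrite /d; field; rewrite gt_eqF.
exists d => //; apply: hX.
  by rewrite /symmetric_mx linearB /= linearZ /= hA hS.
move=> i j; rewrite !mxE addrAC subrr add0r normrN normrM gtr0_norm //.
have : d * `|S i j| <= d * mx_bound S by rewrite ler_wpM2l ?mx_bound_ge // ltW.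
lra.
Qed.

(* Interior points are nonsingular: a left kernel vector v of A would make
   v (A - d v^T v) v^T = - d (v v^T)^2 negative. *)
Lemma int_cp_rank (R : rcfType) n (A : 'M[R]_n) :
  int_completely_positive A -> \rank A = n.
Proof.
move=> hint; apply/eqP; rewrite -/(row_free A) row_free_unit unitmxE unitfE.
apply/negP => /det0P [v v0 hv].
have hS : (v^T *m v)^T = v^T *m v by rewrite trmx_mul trmxK.
have [d d0 hcp] := int_cp_subZ hint hS.
have := cp_psd v hcp.
rewrite mulmxBr mulmxBl hv mul0mx add0r -scalemxAr -scalemxAl !mulmxA.
rewrite -(mulmxA (v *m v^T)) !mxE big_ord1.
have q0 := vvt_gt0 v0.
have : 0 < d * ((v *m v^T) 0 0 * (v *m v^T) 0 0) by rewrite !mulr_gt0.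
lra.
Qed.

Lemma int_cp_forward (R : rcfType) n (A : 'M[R]_n) :
  int_completely_positive A ->
  \rank A = n /\
  exists (b1 : 'cV[R]_n) (lam : R),
    (forall i, 0 < b1 i 0) /\ 0 < lam /\
    completely_positive (A - lam *: (b1 *m b1^T)).
Proof.
move=> hint; split; first exact: int_cp_rank.
pose b1 : 'cV[R]_n := const_mx 1.
have hS : (b1 *m b1^T)^T = b1 *m b1^T by rewrite trmx_mul trmxK.
have [d d0 hcp] := int_cp_subZ hint hS.
by exists b1, d; split => // i; rewrite mxE ltr01.
Qed.

Lemma delta_conj (R : comNzRingType) k (M : 'M[R]_k) (j : 'I_k) :
  delta_mx j j *m M *m delta_mx j j = M j j *: delta_mx j j.
Proof.
apply/matrixP => x y; rewrite !mxE (bigD1 j) //= big1 => [|t /negbTE tj]; last first.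
  by rewrite [delta_mx j j t y]mxE tj mulr0.
rewrite !mxE (bigD1 j) //= big1 => [|t /negbTE tj]; last by rewrite !mxE tj andbF mul0r.
rewrite !mxE !eqxx /= !addr0.
by case: (x == j); case: (y == j); rewrite /= ?mulr0 ?mul0r ?mulr1 ?mul1r.
Qed.

Lemma gram_shift_delta (R : comNzRingType) k (F : 'M[R]_k) (a c : R) (j : 'I_k) :
  F^T = F ->
  (a%:M + c *: (delta_mx j j *m F)) *m (a%:M + c *: (delta_mx j j *m F))^T =
  (a ^+ 2)%:M + (a * c) *: (delta_mx j j *m F + F *m delta_mx j j)
  + (c ^+ 2 * (F *m F) j j) *: delta_mx j j.
Proof.
move=> hF.
rewrite linearD /= linearZ /= tr_scalar_mx trmx_mul trmx_delta hF.
rewrite mulmxDl !mulmxDr !mul_scalar_mx !mul_mx_scalar -!scalemxAl -!scalemxAr.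
rewrite mulmxA -(mulmxA _ F F) delta_conj !scalerA -expr2 scale_scalar_mx -expr2.
by rewrite scalerDr -!addrA; congr (_ + _); apply: addrCA.
Qed.

Lemma diag_mx_sum_delta_row (R : pzSemiRingType) k (x : 'I_k -> R) :
  \sum_j x j *: delta_mx j j = diag_mx (\row_j x j).
Proof. by rewrite diag_mx_sum_delta; apply: eq_bigr => j _; rewrite mxE. Qed.

Lemma identity_shift_decomp (R : comNzRingType) k (F : 'M[R]_k) (a c : R) :
  F^T = F -> 2 * a * c = 1 ->
  1%:M + F =
    \sum_j (a%:M + c *: (delta_mx j j *m F)) *m (a%:M + c *: (delta_mx j j *m F))^T
  + \sum_j (1 - k%:R * a ^+ 2 - c ^+ 2 * (F *m F) j j) *: delta_mx j j.
Proof.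
move=> hF hac; under eq_bigr => j _ do rewrite gram_shift_delta //.
rewrite !big_split /= -!scaler_sumr !big_split /= -mulmx_suml -mulmx_sumr.
rewrite -mx1_sum_delta mul1mx mulmx1 -mulr2n -scaler_nat scalerA mulrC mulrA hac.
rewrite scale1r sumr_const card_ord !diag_mx_sum_delta_row.
apply/matrixP => r t; rewrite !mxE mulmxnE !mxE.
move: (\sum_j F r j * F j r) => x.
case: (r == t); last by rewrite !mulr0n mul0rn !addr0 add0r.
by rewrite !mulr1n -mulr_natl; ring.
Qed.


Lemma mul_delta_entry (R : pzSemiRingType) n k (P : 'M[R]_(n, k)) (F : 'M[R]_k) j l i :
  (P *m (delta_mx j j *m F)) l i = P l j * F j i.
Proof.
rewrite -(mul_delta_mx (0 : 'I_1)) !mulmxA -colE -mulmxA -rowE.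
by rewrite mxE big_ord1 !mxE.
Qed.

Lemma cp_conj_identity_shift (R : rcfType) n k (P : 'M[R]_(n, k)) (F : 'M[R]_k)
    (a c d U : R) :
  2 * a * c = 1 -> 0 <= c ->
  (forall l i, 0 <= P l i) -> (forall l i, `|P l i| <= U) ->
  (forall l i, c * (U * d) <= a * P l i) ->
  k%:R * a ^+ 2 + c ^+ 2 * (k%:R * (d * d)) <= 1 ->
  F^T = F -> (forall i j, `|F i j| <= d) ->
  completely_positive (P *m (1%:M + F) *m P^T).
Proof.
move=> hac c0 P0 PU hPa hsmall hF Fd.
rewrite (identity_shift_decomp hF hac) mulmxDr mulmxDl mulmx_sumr mulmx_suml.
rewrite mulmx_sumr mulmx_suml; apply: cpD; apply: cp_sum => j.
  set G := a%:M + _.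
  have -> : P *m (G *m G^T) *m P^T = (P *m G) *m (P *m G)^T.
    by rewrite trmx_mul !mulmxA.
  apply: cp_gram => l i.
  rewrite /G mulmxDr mul_mx_scalar -scalemxAr.
  set M := P *m _; have -> : (a *: P + c *: M) l i = a * P l i + c * M l i by rewrite !mxE.
  rewrite /M mul_delta_entry.
  have hPF : - (U * d) <= P l j * F j i.
    have : `|P l j * F j i| <= U * d.
      by rewrite normrM ler_pM ?normr_ge0.
    by rewrite ler_norml => /andP [].
  have := hPa l i; have := ler_wpM2l c0 hPF; lra.
rewrite -scalemxAr -scalemxAl; apply: cpZ.
  have : (F *m F) j j <= k%:R * (d * d).
    by have := mul_bound Fd Fd j j; rewrite ler_norml => /andP [].
  have : 0 <= c ^+ 2 by rewrite sqr_ge0.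
  nra.
have -> : P *m delta_mx j j *m P^T = col j P *m (col j P)^T.
  by rewrite -(mul_delta_mx (0 : 'I_1)) !colE trmx_mul trmx_delta !mulmxA.
by apply: cp_gram => l i; rewrite mxE.
Qed.

(* The constants are c = k + 1, a = 1/(2c), and
   d = a t / c with t = r / (r + U) <= 1, U bounding the entries of P. *)
Lemma cp_conj_near_identity (R : rcfType) n k (P : 'M[R]_(n, k)) (r : R) :
  0 < r -> (forall l i, r <= P l i) ->
  exists2 d : R, 0 < d & forall F : 'M[R]_k, F^T = F ->
    (forall i j, `|F i j| <= d) -> completely_positive (P *m (1%:M + F) *m P^T).
Proof.
move=> r0 hr.
have [U U0 PU] : exists2 U : R, 0 < U & forall l i, `|P l i| <= U.
  by exists (mx_bound P); [apply: mx_bound_gt0 | apply: mx_bound_ge].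
pose c : R := k.+1%:R; have c0 : 0 < c by rewrite ltr0n.
have hk : k%:R + 1 = c by rewrite natr1.
clearbody c.
pose a := (2 * c)^-1; have a0 : 0 < a by rewrite invr_gt0 mulr_gt0.
have hac : 2 * a * c = 1 by rewrite /a; field; rewrite gt_eqF.
clearbody a.
have rU0 : 0 < r + U by rewrite addr_gt0.
pose t := r / (r + U); have t0 : 0 < t by rewrite divr_gt0.
have t1 : t <= 1 by rewrite /t ler_pdivrMr // mul1r lerDl; apply: ltW.
have htU : t * U <= r.
  rewrite /t mulrAC ler_pdivrMr // mulrDr lerDr.
  by apply: mulr_ge0; apply: ltW.
exists (a * t / c); first by apply: divr_gt0 => //; apply: mulr_gt0.
move=> F hF Fd; apply: (cp_conj_identity_shift hac (ltW c0) _ _ _ _ hF Fd).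
- by move=> l i; apply: le_trans (hr l i); apply: ltW.
- exact: PU.
- move=> l i; have -> : c * (U * (a * t / c)) = a * (t * U).
    by field; rewrite gt_eqF.
  by rewrite ler_pM2l // (le_trans htU).
- have -> : c ^+ 2 * (k%:R * (a * t / c * (a * t / c))) = k%:R * a ^+ 2 * t ^+ 2.
    by field; rewrite gt_eqF.
  have k0 : 0 <= k%:R :> R by rewrite ler0n.
  have hka : k%:R * a <= 2^-1 by rewrite -hk in hac; nra.
  have ha : a <= 2^-1 by rewrite -hk in hac; nra.
  have hka2 : k%:R * a ^+ 2 <= 4^-1 by rewrite expr2 mulrA; nra.
  have ht2 : t ^+ 2 <= 1 by rewrite expr2; nra.
  have : 0 <= k%:R * a ^+ 2 by rewrite mulr_ge0 ?sqr_ge0.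
  nra.
Qed.

(* Indeed every
   symmetric X near A equals P (1 + F) P^T + Rm with F = L (X - A) L^T small. *)
Lemma int_cp_of_positive_gram (R : rcfType) n k (A Rm : 'M[R]_n)
    (P : 'M[R]_(n, k)) (L : 'M[R]_(k, n)) (r : R) :
  symmetric_mx A -> 0 < r -> (forall l i, r <= P l i) -> P *m L = 1%:M ->
  completely_positive Rm -> A = P *m P^T + Rm -> int_completely_positive A.
Proof.
move=> hA r0 hr hPL hRm hAP; split => //.
have [d d0 hcore] := cp_conj_near_identity r0 hr.
pose l := mx_bound L; have l0 : 0 < l := mx_bound_gt0 L.
pose z := n%:R * n%:R * l * l.
have z1 : 0 < 1 + z by rewrite ltr_pwDl // !mulr_ge0 ?ler0n // ltW.
exists (d / (1 + z)); split => [|X hX hXA]; first by rewrite divr_gt0.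
pose F := L *m (X - A) *m L^T.
have hF : F^T = F by rewrite !trmx_mul trmxK linearB /= hX hA mulmxA.
have hPF : P *m F *m P^T = X - A.
  have -> : P *m F *m P^T = (P *m L) *m (X - A) *m (P *m L)^T by rewrite trmx_mul !mulmxA.
  by rewrite hPL mul1mx trmx1 mulmx1.
have -> : X = P *m (1%:M + F) *m P^T + Rm.
  by rewrite mulmxDr mulmx1 mulmxDl hPF addrAC -hAP addrC subrK.
apply: cpD => //; apply: hcore => // i j.
have hE : forall i j, `|(X - A) i j| <= d / (1 + z).
  by move=> i' j'; rewrite !mxE; exact: ltW (hXA i' j').
have hL : forall i j, `|L i j| <= l by move=> i' j'; apply: mx_bound_ge.
have hLT : forall i j, `|L^T i j| <= l by move=> i' j'; rewrite mxE.
apply: le_trans (mul_bound (mul_bound hL hE) hLT i j) _.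
have -> : n%:R * (n%:R * (l * (d / (1 + z))) * l) = d * (z / (1 + z)).
  by rewrite /z; field; rewrite gt_eqF.
apply: ler_piMr; first exact: ltW.
by rewrite ler_pdivrMr // mul1r lerDr ler01.
Qed.

Lemma pos_lower_bound (R : realFieldType) n (f : 'I_n -> R) :
  (forall i, 0 < f i) -> exists2 r, 0 < r & forall i, r <= f i.
Proof.
move=> hf; pose S := \sum_i (f i)^-1.
have S0 : 0 <= S by apply: sumr_ge0 => i _; rewrite invr_ge0 ltW.
exists (1 + S)^-1 => [|i]; first by rewrite invr_gt0 ltr_pwDl.
rewrite -[f i]invrK lef_pV2 ?posrE ?invr_gt0 ?ltr_pwDl // /S (bigD1 i) //=.
have : 0 <= \sum_(j < n | j != i) (f j)^-1.
  by apply: sumr_ge0 => j _; rewrite invr_ge0 ltW.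
lra.
Qed.

Lemma split_gram (R : comNzRingType) n m (B C : 'M[R]_(n, m)) (s : R) :
  row_mx (B + s *: C) (B - s *: C) *m (row_mx (B + s *: C) (B - s *: C))^T =
  2 *: (B *m B^T) + (2 * s ^+ 2) *: (C *m C^T).
Proof.
rewrite tr_row_mx mul_row_col.
apply/matrixP => l l'; rewrite !mxE !mulr_sumr -!big_split /=.
by apply: eq_bigr => t _; rewrite !mxE; ring.
Qed.

Lemma split_entries_ge (R : realFieldType) n m (B C : 'M[R]_(n, m)) (s rho : R) :
  (forall l i, rho <= B l i) -> (forall l i, 0 <= s * C l i <= rho / 2) ->
  forall l i, rho / 2 <= row_mx (B + s *: C) (B - s *: C) l i.
Proof.
move=> hB hC l i; rewrite -[i]splitK; case: split => t /=;
  rewrite ?row_mxEl ?row_mxEr !mxE; have := hB l t; have /andP[] := hC l t; lra.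
Qed.

Lemma split_right_inverse (R : numFieldType) n m (A : 'M[R]_n) (B C : 'M[R]_(n, m))
    (s : R) :
  s != 0 -> A \in unitmx -> A = 2 *: (B *m B^T) + C *m C^T ->
  exists L, row_mx (B + s *: C) (B - s *: C) *m L = 1%:M.
Proof.
move=> s0 Au hA; set P := row_mx _ _.
have hQ1 : P *m col_mx (2^-1)%:M (2^-1)%:M = B.
  rewrite mul_row_col !mul_mx_scalar.
  by apply/matrixP => l i; rewrite !mxE; field.
have hQ2 : P *m col_mx ((2 * s)^-1)%:M (- (2 * s)^-1)%:M = C.
  rewrite mul_row_col !mul_mx_scalar.
  by apply/matrixP => l i; rewrite !mxE; field.
exists ((2 *: (col_mx (2^-1)%:M (2^-1)%:M *m B^T)
         + col_mx ((2 * s)^-1)%:M (- (2 * s)^-1)%:M *m C^T) *m invmx A).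
by rewrite mulmxA mulmxDr -scalemxAr !mulmxA hQ1 hQ2 -hA mulmxV.
Qed.

(* Backward direction: write A = 2 B B^T + C C^T, where every column of B is
   sqrt(lam / 2m) b1, so that the splitting P of (B, C) satisfies
   A = P P^T + (1 - 2 s^2) C C^T. *)
Lemma int_cp_backward (R : rcfType) n (A : 'M[R]_n) (b1 : 'cV[R]_n) (lam : R) :
  symmetric_mx A -> \rank A = n -> (forall i, 0 < b1 i 0) -> 0 < lam ->
  completely_positive (A - lam *: (b1 *m b1^T)) -> int_completely_positive A.
Proof.
move=> hA rk hb lam0 [m [C [m0 [hC hAC]]]].
have Au : A \in unitmx by rewrite -row_free_unit /row_free rk.
have lm0 : 0 <= lam / (2 * m%:R) by rewrite divr_ge0 ?mulr_ge0 ?ler0n // ltW.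
pose beta := Num.sqrt (lam / (2 * m%:R)).
have beta0 : 0 < beta by rewrite sqrtr_gt0 divr_gt0 // mulr_gt0 // ltr0n.
pose B : 'M[R]_(n, m) := \matrix_(l, i) (beta * b1 l 0).
have hA2 : A = 2 *: (B *m B^T) + C *m C^T.
  suff -> : 2 *: (B *m B^T) = lam *: (b1 *m b1^T) by rewrite -hAC addrC subrK.
  apply/matrixP => l l'; rewrite !mxE big_ord1 !mxE.
  under eq_bigr do rewrite !mxE mulrACA -expr2 sqr_sqrtr //.
  by rewrite sumr_const card_ord -mulr_natl; field; rewrite pnatr_eq0 -lt0n.
have [r r0 hr] := pos_lower_bound hb.
pose rho := beta * r; have rho0 : 0 < rho by rewrite mulr_gt0.
pose cC := mx_bound C; have cC0 : 0 < cC := mx_bound_gt0 C.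
pose s := rho / (2 * (rho + cC)).
have s0 : 0 < s by rewrite divr_gt0 // mulr_gt0 // addr_gt0.
have s12 : s <= 2^-1.
  rewrite /s ler_pdivrMr; last by rewrite mulr_gt0 // addr_gt0.
  lra.
have hsC : forall l i, 0 <= s * C l i <= rho / 2.
  move=> l i; apply/andP; split; first by rewrite mulr_ge0 ?hC // ltW.
  have hCc : C l i <= cC := le_trans (ler_norm _) (mx_bound_ge C l i).
  have <- : s * (rho + cC) = rho / 2.
    by rewrite /s; field; apply: lt0r_neq0; apply: addr_gt0.
  by apply: ler_wpM2l; [exact: ltW | lra].
have hB : forall l i, rho <= B l i.
  by move=> l i; rewrite mxE; apply: ler_wpM2l; [exact: ltW | exact: hr].
have [L hL] := split_right_inverse (lt0r_neq0 s0) Au hA2.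
apply: (int_cp_of_positive_gram hA _ (split_entries_ge hB hsC) hL
          (Rm := (1 - 2 * s ^+ 2) *: (C *m C^T))).
- by rewrite divr_gt0.
- apply: cpZ; last exact: cp_gram.
  have : s ^+ 2 <= 4^-1 by rewrite expr2; nra.
  lra.
- by rewrite split_gram -addrA -scalerDl subrKC scale1r -hA2.
Qed.

Theorem lemma6p1 (R : rcfType) (n : nat) (A : 'M[R]_n) (hA : symmetric_mx A) :
  int_completely_positive A <->
  (\rank A = n /\
   exists (b1 : 'cV[R]_n) (lam : R),
     (forall i, 0 < b1 i 0) /\ 0 < lam /\
     completely_positive (A - lam *: (b1 *m b1^T))).
Proof.
split; first exact: int_cp_forward.
by move=> [rk [b1 [lam [hb [lam0 hcp]]]]]; apply: (int_cp_backward hA rk hb lam0 hcp).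
Qed.
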